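(* Let $T>0$ and $\beta\in\mathbb{R}$ with $|\beta|<\frac{1}{2T}$. Then the boundary value problem $$\left(\frac{u'}{\sqrt{1+u'^2}}\right)'=\beta\cos u\ \text{on }[0,T],\qquad u(0)=u(T)=u'(T)$$ has at least one solution.
   Context: A solution is a function $u\in C^1([0,T],\mathbb{R})$ satisfying the boundary conditions such that $t\mapsto u'(t)/\sqrt{1+u'(t)^2}$ is continuously differentiable and the equation holds for all $t\in[0,T]$. *)

From Stdlib Require Import Reals.
Open Scope R_scope.

Definition has_deriv_on (a b : R) (f : R -> R) (x l : R) : Prop :=
  forall eps : R, eps > 0 -> exists delta : R, delta > 0 /\
    forall h : R, h <> 0 -> Rabs h < delta -> a <= x + h <= b ->
      Rabs ((f (x + h) - f x) / h - l) < eps.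

Definition continuous_on_at (a b : R) (f : R -> R) (x : R) : Prop :=
  forall eps : R, eps > 0 -> exists delta : R, delta > 0 /\
    forall y : R, a <= y <= b -> Rabs (y - x) < delta -> Rabs (f y - f x) < eps.

Definition C1_on (a b : R) (f f' : R -> R) : Prop :=
  (forall x, a <= x <= b -> has_deriv_on a b f x (f' x)) /\
  (forall x, a <= x <= b -> continuous_on_at a b f' x).

Definition phi (v : R) : R := v / sqrt (1 + v ^ 2).

Definition is_solution (T beta : R) (u : R -> R) : Prop :=
  exists u' : R -> R,
    C1_on 0 T u u' /\
    C1_on 0 T (fun t => phi (u' t)) (fun t => beta * cos (u t)) /\
    u 0 = u T /\ u T = u' T.

(* Writing w = phi u', the equation becomes the first-order system u' = phi_inv w,
   w' = beta cos u, where phi_inv w = w / sqrt (1 - w^2) inverts phi on (-1, 1).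
   Shoot backwards from t = T with w(T) = a and u(T) = u'(T) = phi_inv a, |a| <= 1/2.
   Then |w(t) - a| <= |beta| T < 1/2 on [0, T], so w stays in a compact subinterval of
   (-1, 1) on which phi_inv is Lipschitz; clipping phi_inv outside it, the backward
   initial value problem is solved by Picard iteration, which contracts in the sup norm
   weighted by exp (lam (T - t)).  The shot a |-> u(T) - u(0) = int_0^T phi_inv w is
   continuous, positive at a = 1/2 and negative at a = -1/2 (w keeps the sign of a), so
   it vanishes somewhere by the intermediate value theorem. *)

From Stdlib Require Import Reals Lra Lia Psatz.
From Coquelicot Require Import Coquelicot.
Open Scope R_scope.

Definition clip (a b x : R) : R := Rmax a (Rmin b x).

Lemma clip_in a b x : a <= b -> a <= clip a b x <= b.
Proof. intros. unfold clip, Rmax, Rmin. repeat case Rle_dec; lra. Qed.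

Lemma clip_id a b x : a <= x <= b -> clip a b x = x.
Proof. intros. unfold clip, Rmax, Rmin. repeat case Rle_dec; lra. Qed.

Lemma clip_lipschitz a b x y : a <= b -> Rabs (clip a b x - clip a b y) <= Rabs (x - y).
Proof.
intros. unfold clip, Rmax, Rmin. repeat case Rle_dec; intros;
  unfold Rabs; repeat case Rcase_abs; lra.
Qed.

Lemma Rabs_sub_sub_le a b x y : Rabs ((a - x) - (b - y)) <= Rabs (a - b) + Rabs (x - y).
Proof.
replace ((a - x) - (b - y)) with ((a - b) + - (x - y)) by ring.
rewrite <- (Rabs_Ropp (x - y)). apply Rabs_triang.
Qed.

Definition continuous_R (f : R -> R) : Prop := forall x, continuous f x.

Lemma continuous_R_const c : continuous_R (fun _ => c).
Proof. intros x. apply continuous_const. Qed.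

Lemma continuous_R_comp f g : continuous_R f -> continuous_R g -> continuous_R (fun x => g (f x)).
Proof. intros Hf Hg x. apply continuous_comp; [apply Hf | apply Hg]. Qed.

Lemma continuous_R_minus f g : continuous_R f -> continuous_R g -> continuous_R (fun x => f x - g x).
Proof.
intros Hf Hg x.
apply (@continuous_plus R_UniformSpace R_AbsRing R_NormedModule f (fun x => - g x)); [apply Hf|].
apply (@continuous_opp R_UniformSpace R_AbsRing R_NormedModule). apply Hg.
Qed.

Lemma continuous_R_scal k f : continuous_R f -> continuous_R (fun x => k * f x).
Proof.
intros Hf x. apply (@continuous_mult R_UniformSpace R_AbsRing (fun _ => k) f).
apply continuous_const. apply Hf.
Qed.

Lemma continuous_R_of_derive f df : (forall x, is_derive f x (df x)) -> continuous_R f.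
Proof. intros Hd x. apply (@ex_derive_continuous R_AbsRing R_NormedModule). eexists. apply Hd. Qed.

Lemma lipschitz_continuous f M : 0 <= M ->
  (forall x y, Rabs (f x - f y) <= M * Rabs (x - y)) -> continuous_R f.
Proof.
intros HM Hf x. apply continuity_pt_filterlim.
intros eps Heps. exists (eps / (M + 1)). split.
- apply Rdiv_lt_0_compat; lra.
- intros y [_ Hy]. simpl in *. unfold Rdist in *.
  assert (Hd : 0 < eps / (M + 1)) by (apply Rdiv_lt_0_compat; lra).
  eapply Rle_lt_trans; [apply Hf|].
  apply Rle_lt_trans with (M * (eps / (M + 1))); [apply Rmult_le_compat_l; lra|].
  replace eps with ((M + 1) * (eps / (M + 1))) at 2 by (field; lra). nra.
Qed.

Lemma lipschitz_of_derive_bound f df a b M :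
  (forall x, a <= x <= b -> is_derive f x (df x)) ->
  (forall x, a <= x <= b -> Rabs (df x) <= M) ->
  forall x y, a <= x <= b -> a <= y <= b -> Rabs (f x - f y) <= M * Rabs (x - y).
Proof.
intros Hd Hb x y Hx Hy.
assert (Hrange : forall z, Rmin y x <= z <= Rmax y x -> a <= z <= b).
{ intros z Hz. assert (a <= Rmin y x) by (apply Rmin_glb; lra).
  assert (Rmax y x <= b) by (apply Rmax_lub; lra). lra. }
destruct (MVT_gen f y x df) as [c [Hc ->]].
- intros z Hz. apply Hd, Hrange. lra.
- intros z Hz. apply continuity_pt_filterlim, (@ex_derive_continuous R_AbsRing R_NormedModule).
  eexists. apply Hd, Hrange, Hz.
- rewrite Rabs_mult. apply Rmult_le_compat_r; [apply Rabs_pos | apply Hb, Hrange, Hc].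
Qed.

Lemma lipschitz_of_derive_bound_R f df M :
  (forall x, is_derive f x (df x)) -> (forall x, Rabs (df x) <= M) ->
  forall x y, Rabs (f x - f y) <= M * Rabs (x - y).
Proof.
intros Hd Hb x y.
apply (lipschitz_of_derive_bound f df (Rmin x y) (Rmax x y)); auto.
- split; [apply Rmin_l | apply Rmax_l].
- split; [apply Rmin_r | apply Rmax_r].
Qed.

Lemma cos_lipschitz x y : Rabs (cos x - cos y) <= Rabs (x - y).
Proof.
rewrite <- (Rmult_1_l (Rabs (x - y))).
apply (lipschitz_of_derive_bound_R cos (fun t => - sin t)).
- intros t. auto_derive; [easy | ring].
- intros t. rewrite Rabs_Ropp. apply Rabs_le, SIN_bound.
Qed.

Lemma continuous_R_cos : continuous_R cos.
Proof.
apply (lipschitz_continuous cos 1); [lra|].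
intros x y. rewrite Rmult_1_l. apply cos_lipschitz.
Qed.

Lemma ex_RInt_continuous_R h a b : continuous_R h -> ex_RInt h a b.
Proof. intros Hh. apply (@ex_RInt_continuous R_CompleteNormedModule). intros; apply Hh. Qed.

Lemma RInt_minus_continuous_R f h a b : continuous_R f -> continuous_R h ->
  RInt (fun x => f x - h x) a b = RInt f a b - RInt h a b.
Proof. intros Hf Hh. apply (@RInt_minus R_CompleteNormedModule); apply ex_RInt_continuous_R; auto. Qed.

Lemma is_derive_RInt_lower h b t : continuous_R h ->
  is_derive (fun t => RInt h t b) t (- h t).
Proof.
intros Hh. apply (@is_derive_RInt' R_CompleteNormedModule h _ t b).
- apply filter_forall. intros x. apply (@RInt_correct R_CompleteNormedModule).
  apply ex_RInt_continuous_R, Hh.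
- apply Hh.
Qed.

Lemma is_derive_sub_scal_RInt c k h b t : continuous_R h ->
  is_derive (fun t => c - k * RInt h t b) t (k * h t).
Proof.
intros Hh. replace (k * h t) with (0 - k * - h t) by ring.
apply (@is_derive_minus R_AbsRing R_NormedModule (fun _ => c)).
- exact (is_derive_const c t).
- apply is_derive_scal, is_derive_RInt_lower, Hh.
Qed.

Lemma is_derive_sub_RInt c h b t : continuous_R h ->
  is_derive (fun t => c - RInt h t b) t (h t).
Proof.
intros Hh. rewrite <- (Rmult_1_l (h t)).
apply (is_derive_ext (fun t => c - 1 * RInt h t b)); [intros s; apply (f_equal (Rminus c)), Rmult_1_l|].
apply is_derive_sub_scal_RInt, Hh.
Qed.

Lemma has_deriv_on_of_is_derive a b f x l : is_derive f x l -> has_deriv_on a b f x l.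
Proof.
intros H. apply is_derive_Reals in H. intros eps Heps.
destruct (H eps Heps) as [delta Hd]. exists delta. split; [apply cond_pos|].
intros h Hh Hlt _. apply Hd; auto.
Qed.

Lemma has_deriv_on_ext a b f h x l : a <= x <= b -> (forall s, a <= s <= b -> h s = f s) ->
  has_deriv_on a b f x l -> has_deriv_on a b h x l.
Proof.
intros Hx He H eps Heps. destruct (H eps Heps) as [d [Hd Hf]]. exists d. split; auto.
intros k Hk Hlt Hin. rewrite !He by auto. apply Hf; auto.
Qed.

Lemma continuous_on_at_of_continuous a b f x : continuous f x -> continuous_on_at a b f x.
Proof.
intros H. apply continuity_pt_filterlim in H. intros eps Heps.
destruct (H eps Heps) as [alp [Ha Hb]]. exists alp. split; auto.
intros y _ Hy. destruct (Req_dec y x) as [->|Hne].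
- rewrite Rminus_diag, Rabs_R0. lra.
- apply Hb. split; [split; [exact I | auto] | simpl; unfold Rdist; auto].
Qed.

Definition phi_inv (w : R) : R := w / sqrt (1 - w ^ 2).

Definition dphi_inv (w : R) : R := / ((1 - w ^ 2) * sqrt (1 - w ^ 2)).

Lemma is_derive_phi_inv w : -1 < w < 1 -> is_derive phi_inv w (dphi_inv w).
Proof.
intros Hw. unfold phi_inv, dphi_inv.
assert (H1 : 0 < 1 - w ^ 2) by (simpl; nra).
assert (Hs := sqrt_lt_R0 _ H1).
assert (Hss := sqrt_sqrt (1 - w ^ 2) (Rlt_le _ _ H1)).
auto_derive.
- replace (1 + - (w * (w * 1))) with (1 - w ^ 2) by ring. repeat split; lra.
- replace (1 + - (w * (w * 1))) with (1 - w ^ 2) by ring.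
  set (s := sqrt (1 - w ^ 2)) in *.
  assert (E : w * w = 1 - s * s) by (simpl in Hss; lra).
  transitivity ((s * s + w * w) / (s * s * s)); [field; lra|].
  replace (w ^ 2) with (w * w) by ring. rewrite E. field; lra.
Qed.

Lemma dphi_inv_le r c : r < 1 -> Rabs c <= r -> Rabs (dphi_inv c) <= dphi_inv r.
Proof.
intros Hr Hc. apply Rabs_le_between in Hc.
assert (Hc2 : c ^ 2 <= r ^ 2) by nra.
assert (Hr2 : 0 < 1 - r ^ 2) by nra.
assert (Hsr := sqrt_lt_R0 _ Hr2).
assert (Hs : sqrt (1 - r ^ 2) <= sqrt (1 - c ^ 2)) by (apply sqrt_le_1_alt; lra).
unfold dphi_inv. rewrite Rabs_pos_eq.
- apply Rinv_le_contravar; [nra | apply Rmult_le_compat; lra].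
- apply Rlt_le, Rinv_0_lt_compat. apply Rmult_lt_0_compat; lra.
Qed.

Lemma phi_inv_lipschitz r a b : r < 1 -> Rabs a <= r -> Rabs b <= r ->
  Rabs (phi_inv a - phi_inv b) <= dphi_inv r * Rabs (a - b).
Proof.
intros Hr Ha Hb. apply Rabs_le_between in Ha, Hb.
apply (lipschitz_of_derive_bound phi_inv dphi_inv (- r) r); try lra.
- intros x Hx. apply is_derive_phi_inv. lra.
- intros x Hx. apply dphi_inv_le; [lra | apply Rabs_le; lra].
Qed.

Lemma phi_phi_inv w : -1 < w < 1 -> phi (phi_inv w) = w.
Proof.
intros Hw. unfold phi, phi_inv.
assert (H1 : 0 < 1 - w ^ 2) by (simpl; nra).
assert (Hs := sqrt_lt_R0 _ H1).
assert (Hss := sqrt_sqrt (1 - w ^ 2) (Rlt_le _ _ H1)).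
set (s := sqrt (1 - w ^ 2)) in *.
replace (1 + (w / s) ^ 2) with ((/ s) ^ 2).
- rewrite sqrt_pow2; [field; lra | apply Rlt_le, Rinv_0_lt_compat; lra].
- assert (E : w * w = 1 - s * s) by (simpl in Hss; lra).
  simpl. field_simplify; try lra. replace (w ^ 2) with (w * w) by ring. rewrite E. field. lra.
Qed.

Lemma le_phi_inv w : 0 <= w < 1 -> w <= phi_inv w.
Proof.
intros Hw. unfold phi_inv.
assert (H1 : 0 < 1 - w ^ 2) by (simpl; nra).
assert (Hs := sqrt_lt_R0 _ H1).
assert (Hs1 : sqrt (1 - w ^ 2) <= 1) by (rewrite <- sqrt_1 at 2; apply sqrt_le_1_alt; simpl; nra).
apply (Rmult_le_reg_r (sqrt (1 - w ^ 2))); [lra|].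
unfold Rdiv. rewrite Rmult_assoc, Rinv_l; nra.
Qed.

Lemma phi_inv_opp w : phi_inv (- w) = - phi_inv w.
Proof. unfold phi_inv. replace ((- w) ^ 2) with (w ^ 2) by ring. unfold Rdiv. ring. Qed.

Lemma phi_inv_le w : -1 < w <= 0 -> phi_inv w <= w.
Proof.
intros Hw. rewrite <- (Ropp_involutive w), phi_inv_opp.
assert (H := le_phi_inv (- w) ltac:(lra)). lra.
Qed.

Lemma dphi_inv_pos r : -1 < r < 1 -> 0 < dphi_inv r.
Proof.
intros Hr. assert (H1 : 0 < 1 - r ^ 2) by (simpl; nra).
apply Rinv_0_lt_compat, Rmult_lt_0_compat; [lra | apply sqrt_lt_R0, H1].
Qed.

Definition phi_inv_clip (r w : R) : R := phi_inv (clip (- r) r w).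

Lemma Rabs_clip_le r w : 0 <= r -> Rabs (clip (- r) r w) <= r.
Proof. intros Hr. apply Rabs_le, clip_in. lra. Qed.

Lemma phi_inv_clip_lipschitz r a b : 0 <= r < 1 ->
  Rabs (phi_inv_clip r a - phi_inv_clip r b) <= dphi_inv r * Rabs (a - b).
Proof.
intros Hr. unfold phi_inv_clip.
eapply Rle_trans; [apply (phi_inv_lipschitz r); [lra | apply Rabs_clip_le; lra ..]|].
apply Rmult_le_compat_l; [apply Rlt_le, dphi_inv_pos; lra | apply clip_lipschitz; lra].
Qed.

Lemma phi_inv_clip_bound r w : 0 <= r < 1 -> Rabs (phi_inv_clip r w) <= dphi_inv r.
Proof.
intros Hr. unfold phi_inv_clip.
replace (phi_inv (clip (- r) r w)) with (phi_inv (clip (- r) r w) - phi_inv 0)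
  by (unfold phi_inv, Rdiv; ring).
assert (Hc := Rabs_clip_le r w (proj1 Hr)).
assert (HL := dphi_inv_pos r ltac:(lra)).
eapply Rle_trans; [apply (phi_inv_lipschitz r); [lra | exact Hc | rewrite Rabs_R0; lra]|].
rewrite Rminus_0_r. rewrite <- (Rmult_1_r (dphi_inv r)) at 2.
apply Rmult_le_compat_l; lra.
Qed.

Lemma le_of_le_add_geometric x y D : 0 <= D -> (forall n, x <= y + D * (/ 2) ^ n) -> x <= y.
Proof.
intros HD H. destruct (Rle_dec x y) as [|Hn]; [auto|]. exfalso.
destruct (pow_lt_1_zero (/ 2) ltac:(rewrite Rabs_pos_eq; lra) ((x - y) / (D + 1))) as [N HN].
{ apply Rdiv_lt_0_compat; lra. }
specialize (HN N (le_n N)). specialize (H N).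
assert (Hp : 0 <= (/ 2) ^ N) by (apply pow_le; lra).
rewrite Rabs_pos_eq in HN by exact Hp.
assert (D * (/ 2) ^ N <= (D + 1) * (/ 2) ^ N) by nra.
assert (Hlt : (D + 1) * (/ 2) ^ N < (D + 1) * ((x - y) / (D + 1))) by (apply Rmult_lt_compat_l; lra).
replace ((D + 1) * ((x - y) / (D + 1))) with (x - y) in Hlt by (field; lra).
lra.
Qed.

Definition seq_lim (a : nat -> R) : R := real (Lim_seq a).

Lemma seq_lim_geometric (a : nat -> R) B :
  (forall n m, Rabs (a (m + n)%nat - a n) <= B * (/ 2) ^ n) ->
  forall n, Rabs (seq_lim a - a n) <= B * (/ 2) ^ n.
Proof.
intros H.
assert (HB : 0 <= B).
{ specialize (H O O). simpl in H. rewrite Rminus_diag, Rabs_R0 in H. lra. }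
assert (Hc : ex_finite_lim_seq a).
{ apply ex_lim_seq_cauchy_corr. intros eps.
  destruct (pow_lt_1_zero (/ 2) ltac:(rewrite Rabs_pos_eq; lra) (eps / (2 * B + 1))) as [N HN].
  { apply Rdiv_lt_0_compat; [apply cond_pos | lra]. }
  exists N. intros n m Hn Hm.
  assert (Hp : 0 <= (/ 2) ^ N) by (apply pow_le; lra).
  specialize (HN N (le_n N)). rewrite Rabs_pos_eq in HN by exact Hp.
  assert (Htail : forall k, (N <= k)%nat -> Rabs (a k - a N) <= B * (/ 2) ^ N).
  { intros k Hk. replace k with ((k - N) + N)%nat by lia. apply H. }
  assert (H1 := Htail n Hn). assert (H2 := Htail m Hm).
  assert (Rabs (a n - a m) <= 2 * B * (/ 2) ^ N).
  { replace (a n - a m) with ((a n - a N) - (a m - a N)) by ring.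
    eapply Rle_trans; [apply Rabs_triang|]. rewrite Rabs_Ropp. lra. }
  assert (Hlt : (2 * B + 1) * (/ 2) ^ N < (2 * B + 1) * (eps / (2 * B + 1)))
    by (apply Rmult_lt_compat_l; lra).
  replace ((2 * B + 1) * (eps / (2 * B + 1))) with (pos eps) in Hlt by (field; lra).
  nra. }
destruct Hc as [l Hl].
intros n. unfold seq_lim. rewrite (is_lim_seq_unique _ _ Hl). simpl.
assert (Hl2 : is_lim_seq (fun m => Rabs (a (m + n)%nat - a n)) (Rabs (l - a n))).
{ apply (is_lim_seq_abs _ (Finite (l - a n))).
  apply (is_lim_seq_minus _ _ (Finite l) (Finite (a n))); [| apply is_lim_seq_const | reflexivity].
  apply (is_lim_seq_incr_n a n l), Hl. }
exact (is_lim_seq_le _ _ _ _ (fun m => H n m) Hl2 (is_lim_seq_const (B * (/ 2) ^ n))).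
Qed.

Lemma Rabs_sub_le_of_geometric_approx A B (a b : nat -> R) C D :
  (forall n, Rabs (A - a n) <= D * (/ 2) ^ n) -> (forall n, Rabs (B - b n) <= D * (/ 2) ^ n) ->
  (forall n, Rabs (a n - b n) <= C) -> Rabs (A - B) <= C.
Proof.
intros Ha Hb Hab.
assert (HD : 0 <= D) by (specialize (Ha O); simpl in Ha; assert (H := Rabs_pos (A - a O)); lra).
apply (le_of_le_add_geometric _ _ (2 * D)); [lra|]. intros n.
replace (A - B) with ((A - a n) + (a n - b n) - (B - b n)) by ring.
assert (Ha' := Ha n). assert (Hb' := Hb n). assert (Hab' := Hab n).
revert Ha' Hb' Hab'. unfold Rabs. repeat case Rcase_abs; lra.
Qed.

Section Shooting.

Variables T beta : R.
Hypothesis hT : 0 < T.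
Hypothesis hbT : Rabs beta * T < 1 / 2.

Definition w_max : R := 1 / 2 + Rabs beta * T.
Definition slope_lip : R := dphi_inv w_max.
Definition lip : R := slope_lip + Rabs beta.
Definition lam : R := 2 * lip.
Definition weight (t : R) : R := exp (lam * (T - t)).
Definition slope (w : R) : R := phi_inv_clip w_max w.

Lemma w_max_range : 0 <= w_max < 1.
Proof.
unfold w_max. assert (0 <= Rabs beta * T) by (apply Rmult_le_pos; [apply Rabs_pos | lra]). lra.
Qed.

Lemma slope_lip_pos : 0 < slope_lip.
Proof. apply dphi_inv_pos. assert (H := w_max_range). lra. Qed.

Lemma lip_pos : 0 < lip.
Proof. unfold lip. assert (H := slope_lip_pos). assert (H' := Rabs_pos beta). lra. Qed.

Lemma lam_pos : 0 < lam.
Proof. unfold lam. assert (H := lip_pos). lra. Qed.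

Lemma slope_lipschitz a b : Rabs (slope a - slope b) <= slope_lip * Rabs (a - b).
Proof. apply phi_inv_clip_lipschitz, w_max_range. Qed.

Lemma slope_bound w : Rabs (slope w) <= slope_lip.
Proof. apply phi_inv_clip_bound, w_max_range. Qed.

Lemma continuous_R_slope : continuous_R slope.
Proof. apply (lipschitz_continuous _ slope_lip); [apply Rlt_le, slope_lip_pos | apply slope_lipschitz]. Qed.

Lemma weight_ge_1 t : t <= T -> 1 <= weight t.
Proof.
intros Ht. assert (H := exp_ineq1_le (lam * (T - t))).
assert (0 <= lam * (T - t)) by (apply Rmult_le_pos; [apply Rlt_le, lam_pos | lra]).
unfold weight. lra.
Qed.

Lemma weight_le_weight_0 t : 0 <= t -> weight t <= weight 0.
Proof.
intros Ht. unfold weight. assert (H := lam_pos).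
destruct (Req_dec t 0) as [->|]; [lra|]. left. apply exp_increasing. nra.
Qed.

Lemma is_derive_weight t : is_derive weight t (- lam * weight t).
Proof. unfold weight, Rminus. auto_derive; [easy | ring]. Qed.

Lemma continuous_R_weight : continuous_R weight.
Proof. apply (continuous_R_of_derive _ _ is_derive_weight). Qed.

Lemma RInt_weight B t : RInt (fun s => B * weight s) t T = B * (weight t - 1) / lam.
Proof.
apply is_RInt_unique. assert (Hl := lam_pos).
replace (B * (weight t - 1) / lam)
  with (minus ((fun s => - B * weight s / lam) T) ((fun s => - B * weight s / lam) t)).
2:{ unfold minus, plus, opp; simpl. unfold weight. rewrite Rminus_diag, Rmult_0_r, exp_0. field. lra. }
apply (@is_RInt_derive R_CompleteNormedModule (fun s => - B * weight s / lam)).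
- intros x _. unfold weight, Rminus. auto_derive; [easy|]. field. lra.
- intros x _. apply continuous_R_scal, continuous_R_weight.
Qed.

Lemma RInt_weight_bound h B t : t <= T -> continuous_R h ->
  (forall s, t <= s <= T -> Rabs (h s) <= B * weight s) ->
  Rabs (RInt h t T) <= B * weight t / lam.
Proof.
intros Ht Hh Hb.
assert (HB : 0 <= B).
{ assert (H1 := Hb T ltac:(lra)). assert (H2 := weight_ge_1 T (Rle_refl T)).
  assert (H3 := Rabs_pos (h T)). nra. }
assert (Hl := lam_pos). assert (HE := weight_ge_1 t Ht).
eapply Rle_trans; [apply abs_RInt_le; [lra | apply ex_RInt_continuous_R, Hh]|].
eapply Rle_trans; [apply (RInt_le _ (fun s => B * weight s)); [lra | | | intros x Hx; apply Hb; lra]|].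
- apply ex_RInt_continuous_R, (continuous_R_comp h Rabs Hh). intros x. apply continuous_Rabs.
- apply ex_RInt_continuous_R, continuous_R_scal, continuous_R_weight.
- rewrite RInt_weight. apply Rmult_le_compat_r; [apply Rlt_le, Rinv_0_lt_compat; lra | nra].
Qed.

Local Notation fpair := ((R -> R) * (R -> R))%type.

Definition continuous_pair (X : fpair) : Prop := continuous_R (fst X) /\ continuous_R (snd X).

Definition picard (u0 w0 : R) (X : fpair) : fpair :=
  (fun t => u0 - RInt (fun s => slope (snd X s)) t T,
   fun t => w0 - beta * RInt (fun s => cos (fst X s)) t T).

Lemma continuous_picard u0 w0 X : continuous_pair X -> continuous_pair (picard u0 w0 X).
Proof.
intros [HU HW]. split.
- apply (continuous_R_of_derive _ (fun t => slope (snd X t))). intros t.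
  apply (is_derive_sub_RInt u0 (fun s => slope (snd X s))), (continuous_R_comp _ _ HW continuous_R_slope).
- apply (continuous_R_of_derive _ (fun t => beta * cos (fst X t))). intros t.
  apply (is_derive_sub_scal_RInt w0 beta (fun s => cos (fst X s))), (continuous_R_comp _ _ HU continuous_R_cos).
Qed.

Definition pdist (X Y : fpair) (t : R) : R :=
  Rabs (fst X t - fst Y t) + Rabs (snd X t - snd Y t).

Lemma pdist_nonneg X Y t : 0 <= pdist X Y t.
Proof. unfold pdist. assert (H1 := Rabs_pos (fst X t - fst Y t)). assert (H2 := Rabs_pos (snd X t - snd Y t)). lra. Qed.

Lemma pdist_sym X Y t : pdist X Y t = pdist Y X t.
Proof. unfold pdist. rewrite (Rabs_minus_sym (fst X t)), (Rabs_minus_sym (snd X t)). reflexivity. Qed.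

Lemma pdist_triang X Y Z t : pdist X Z t <= pdist X Y t + pdist Y Z t.
Proof.
unfold pdist.
assert (H1 := Rabs_triang (fst X t - fst Y t) (fst Y t - fst Z t)).
assert (H2 := Rabs_triang (snd X t - snd Y t) (snd Y t - snd Z t)).
replace (fst X t - fst Y t + (fst Y t - fst Z t)) with (fst X t - fst Z t) in H1 by ring.
replace (snd X t - snd Y t + (snd Y t - snd Z t)) with (snd X t - snd Z t) in H2 by ring.
lra.
Qed.

(* Choosing [lam = 2 * lip] is what makes each step halve the weighted distance. *)
Lemma picard_contraction u1 w1 u2 w2 X Y A t :
  continuous_pair X -> continuous_pair Y -> t <= T ->
  (forall s, t <= s <= T -> pdist X Y s <= A * weight s) ->
  pdist (picard u1 w1 X) (picard u2 w2 Y) t <= Rabs (u1 - u2) + Rabs (w1 - w2) + A / 2 * weight t.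
Proof.
intros [HU1 HW1] [HU2 HW2] Ht Hb.
assert (HA : 0 <= A).
{ assert (H1 := Hb T ltac:(lra)). assert (H2 := weight_ge_1 T (Rle_refl T)).
  assert (H3 := pdist_nonneg X Y T). nra. }
assert (Hslope : Rabs (RInt (fun s => slope (snd X s) - slope (snd Y s)) t T) <= slope_lip * A * weight t / lam).
{ apply RInt_weight_bound; auto.
  - apply continuous_R_minus; apply continuous_R_comp; auto using continuous_R_slope.
  - intros s Hs. eapply Rle_trans; [apply slope_lipschitz|]. rewrite Rmult_assoc.
    apply Rmult_le_compat_l; [apply Rlt_le, slope_lip_pos|].
    assert (H1 := Hb s Hs). unfold pdist in H1. assert (H2 := Rabs_pos (fst X s - fst Y s)). lra. }
assert (Hcos : Rabs (RInt (fun s => cos (fst X s) - cos (fst Y s)) t T) <= A * weight t / lam).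
{ apply RInt_weight_bound; auto.
  - apply continuous_R_minus; apply continuous_R_comp; auto using continuous_R_cos.
  - intros s Hs. eapply Rle_trans; [apply cos_lipschitz|].
    assert (H1 := Hb s Hs). unfold pdist in H1. assert (H2 := Rabs_pos (snd X s - snd Y s)). lra. }
rewrite RInt_minus_continuous_R in Hslope, Hcos by (apply continuous_R_comp; auto using continuous_R_slope, continuous_R_cos).
unfold pdist, picard; simpl.
assert (Hu := Rabs_sub_sub_le u1 u2 (RInt (fun s => slope (snd X s)) t T) (RInt (fun s => slope (snd Y s)) t T)).
assert (Hw := Rabs_sub_sub_le w1 w2 (beta * RInt (fun s => cos (fst X s)) t T) (beta * RInt (fun s => cos (fst Y s)) t T)).
rewrite <- Rmult_minus_distr_l, Rabs_mult in Hw.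
assert (Hbeta : Rabs beta * Rabs (RInt (fun s => cos (fst X s)) t T - RInt (fun s => cos (fst Y s)) t T)
  <= Rabs beta * (A * weight t / lam)) by (apply Rmult_le_compat_l; [apply Rabs_pos | exact Hcos]).
assert (Hhalf : slope_lip * A * weight t / lam + Rabs beta * (A * weight t / lam) = A / 2 * weight t).
{ assert (Hl := lam_pos). unfold lam, lip in *. field. lra. }
lra.
Qed.

Fixpoint picard_iter (u0 w0 : R) (n : nat) : fpair :=
  match n with
  | O => (fun _ => u0, fun _ => w0)
  | S m => picard u0 w0 (picard_iter u0 w0 m)
  end.

Lemma continuous_picard_iter u0 w0 n : continuous_pair (picard_iter u0 w0 n).
Proof.
induction n as [|n IH]; simpl.
- split; apply continuous_R_const.
- apply continuous_picard, IH.
Qed.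

Lemma picard_first_step u0 w0 t : t <= T ->
  pdist (picard_iter u0 w0 1) (picard_iter u0 w0 0) t <= weight t.
Proof.
intros Ht. unfold pdist; simpl. rewrite !RInt_const. unfold scal; simpl; unfold mult; simpl.
replace (u0 - (T - t) * slope w0 - u0) with (- ((T - t) * slope w0)) by ring.
replace (w0 - beta * ((T - t) * cos u0) - w0) with (- (beta * ((T - t) * cos u0))) by ring.
rewrite !Rabs_Ropp, !Rabs_mult, (Rabs_pos_eq (T - t)) by lra.
assert (H1 := slope_bound w0). assert (H2 : Rabs (cos u0) <= 1) by apply Rabs_le, COS_bound.
assert (H3 := Rabs_pos beta). assert (H4 := Rabs_pos (cos u0)). assert (H5 := slope_lip_pos).
assert (Hexp := exp_ineq1_le (lam * (T - t))).
assert (Hlin : Rabs beta * ((T - t) * Rabs (cos u0)) + (T - t) * Rabs (slope w0) <= lip * (T - t)).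
{ assert (Ha : (T - t) * Rabs (slope w0) <= (T - t) * slope_lip) by (apply Rmult_le_compat_l; lra).
  assert (Hb : (T - t) * Rabs (cos u0) <= T - t) by nra.
  assert (Hc : Rabs beta * ((T - t) * Rabs (cos u0)) <= Rabs beta * (T - t)) by (apply Rmult_le_compat_l; lra).
  unfold lip. lra. }
assert (Hlip : 0 <= lip * (T - t)) by (unfold lip; apply Rmult_le_pos; lra).
unfold weight, lam in *. lra.
Qed.

Lemma picard_iter_step u0 w0 n t : t <= T ->
  pdist (picard_iter u0 w0 (S n)) (picard_iter u0 w0 n) t <= (/ 2) ^ n * weight t.
Proof.
revert t. induction n as [|n IH]; intros t Ht.
- rewrite pow_O, Rmult_1_l. apply picard_first_step, Ht.
- eapply Rle_trans.
  { apply (picard_contraction _ _ _ _ (picard_iter u0 w0 (S n)) (picard_iter u0 w0 n));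
      [apply continuous_picard_iter .. | exact Ht |].
    intros s Hs. apply IH. lra. }
  rewrite !Rminus_diag, !Rabs_R0. simpl pow. right; field.
Qed.

Lemma picard_iter_cauchy u0 w0 n m t : 0 <= t <= T ->
  pdist (picard_iter u0 w0 (m + n)) (picard_iter u0 w0 n) t <= 2 * weight 0 * (/ 2) ^ n.
Proof.
intros Ht.
assert (Htele : pdist (picard_iter u0 w0 (m + n)) (picard_iter u0 w0 n) t
  <= 2 * ((/ 2) ^ n - (/ 2) ^ (m + n)) * weight t).
{ induction m as [|m IH].
  - unfold pdist. simpl. rewrite !Rminus_diag, !Rabs_R0. lra.
  - eapply Rle_trans; [apply (pdist_triang _ (picard_iter u0 w0 (m + n)))|].
    assert (H := picard_iter_step u0 w0 (m + n) t ltac:(lra)).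
    change (S m + n)%nat with (S (m + n)). simpl pow. lra. }
assert (Hw := weight_le_weight_0 t (proj1 Ht)). assert (Hw1 := weight_ge_1 t (proj2 Ht)).
assert (Hp : 0 <= (/ 2) ^ (m + n)) by (apply pow_le; lra).
assert (Hq : 0 <= (/ 2) ^ n) by (apply pow_le; lra).
nra.
Qed.

(* Evaluating the iterates at [clip 0 T t] extends the limit continuously to all of [R]. *)
Definition picard_lim (u0 w0 : R) : fpair :=
  (fun t => seq_lim (fun n => fst (picard_iter u0 w0 n) (clip 0 T t)),
   fun t => seq_lim (fun n => snd (picard_iter u0 w0 n) (clip 0 T t))).

Lemma picard_lim_approx u0 w0 n t :
  Rabs (fst (picard_lim u0 w0) t - fst (picard_iter u0 w0 n) (clip 0 T t)) <= 2 * weight 0 * (/ 2) ^ n /\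
  Rabs (snd (picard_lim u0 w0) t - snd (picard_iter u0 w0 n) (clip 0 T t)) <= 2 * weight 0 * (/ 2) ^ n.
Proof.
assert (Hc : forall k m, pdist (picard_iter u0 w0 (m + k)) (picard_iter u0 w0 k) (clip 0 T t)
  <= 2 * weight 0 * (/ 2) ^ k) by (intros k m; apply picard_iter_cauchy, clip_in; lra).
split.
- apply (seq_lim_geometric (fun k => fst (picard_iter u0 w0 k) (clip 0 T t))). intros k m.
  specialize (Hc k m). unfold pdist in Hc.
  assert (H := Rabs_pos (snd (picard_iter u0 w0 (m + k)) (clip 0 T t) - snd (picard_iter u0 w0 k) (clip 0 T t))).
  lra.
- apply (seq_lim_geometric (fun k => snd (picard_iter u0 w0 k) (clip 0 T t))). intros k m.
  specialize (Hc k m). unfold pdist in Hc.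
  assert (H := Rabs_pos (fst (picard_iter u0 w0 (m + k)) (clip 0 T t) - fst (picard_iter u0 w0 k) (clip 0 T t))).
  lra.
Qed.

Lemma picard_lim_pdist u0 w0 n t : 0 <= t <= T ->
  pdist (picard_lim u0 w0) (picard_iter u0 w0 n) t <= 4 * weight 0 * (/ 2) ^ n.
Proof.
intros Ht. destruct (picard_lim_approx u0 w0 n t) as [H1 H2].
rewrite clip_id in H1, H2 by exact Ht. unfold pdist. lra.
Qed.

Lemma picard_lipschitz u0 w0 X x y : continuous_pair X ->
  Rabs (fst (picard u0 w0 X) x - fst (picard u0 w0 X) y) <= lip * Rabs (x - y) /\
  Rabs (snd (picard u0 w0 X) x - snd (picard u0 w0 X) y) <= lip * Rabs (x - y).
Proof.
intros [HU HW]. assert (Hs := slope_lip_pos). assert (Hb := Rabs_pos beta). split.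
- apply (lipschitz_of_derive_bound_R _ (fun t => slope (snd X t))).
  + intros z. apply (is_derive_sub_RInt u0 (fun s => slope (snd X s))).
    exact (continuous_R_comp _ _ HW continuous_R_slope).
  + intros z. eapply Rle_trans; [apply slope_bound | unfold lip; lra].
- apply (lipschitz_of_derive_bound_R _ (fun t => beta * cos (fst X t))).
  + intros z. apply (is_derive_sub_scal_RInt w0 beta (fun s => cos (fst X s))).
    exact (continuous_R_comp _ _ HU continuous_R_cos).
  + intros z. rewrite Rabs_mult.
    assert (Rabs (cos (fst X z)) <= 1) by apply Rabs_le, COS_bound.
    unfold lip. nra.
Qed.

Lemma picard_iter_lipschitz u0 w0 n x y :
  Rabs (fst (picard_iter u0 w0 n) x - fst (picard_iter u0 w0 n) y) <= lip * Rabs (x - y) /\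
  Rabs (snd (picard_iter u0 w0 n) x - snd (picard_iter u0 w0 n) y) <= lip * Rabs (x - y).
Proof.
destruct n as [|n].
- simpl. rewrite !Rminus_diag, Rabs_R0.
  assert (0 <= lip * Rabs (x - y)) by (apply Rmult_le_pos; [apply Rlt_le, lip_pos | apply Rabs_pos]).
  split; lra.
- apply picard_lipschitz, continuous_picard_iter.
Qed.

Lemma continuous_picard_lim u0 w0 : continuous_pair (picard_lim u0 w0).
Proof.
assert (Hlip : 0 <= lip) by apply Rlt_le, lip_pos.
assert (Hclip : forall x y, lip * Rabs (clip 0 T x - clip 0 T y) <= lip * Rabs (x - y))
  by (intros x y; apply Rmult_le_compat_l; [exact Hlip | apply clip_lipschitz; lra]).
split; apply (lipschitz_continuous _ lip Hlip); intros x y.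
- apply (Rabs_sub_le_of_geometric_approx _ _ (fun n => fst (picard_iter u0 w0 n) (clip 0 T x))
    (fun n => fst (picard_iter u0 w0 n) (clip 0 T y)) _ (2 * weight 0));
    [intros n; apply picard_lim_approx .. |].
  intros n. eapply Rle_trans; [apply (picard_iter_lipschitz u0 w0 n) | apply Hclip].
- apply (Rabs_sub_le_of_geometric_approx _ _ (fun n => snd (picard_iter u0 w0 n) (clip 0 T x))
    (fun n => snd (picard_iter u0 w0 n) (clip 0 T y)) _ (2 * weight 0));
    [intros n; apply picard_lim_approx .. |].
  intros n. eapply Rle_trans; [apply (picard_iter_lipschitz u0 w0 n) | apply Hclip].
Qed.

Lemma picard_lim_fixed u0 w0 t : 0 <= t <= T ->
  fst (picard_lim u0 w0) t = fst (picard u0 w0 (picard_lim u0 w0)) t /\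
  snd (picard_lim u0 w0) t = snd (picard u0 w0 (picard_lim u0 w0)) t.
Proof.
intros Ht. set (L := picard_lim u0 w0).
assert (HE0 : 1 <= weight 0) by (apply weight_ge_1; lra).
assert (HEt : weight t <= weight 0) by (apply weight_le_weight_0; lra).
assert (Hzero : pdist (picard u0 w0 L) L t <= 0).
{ apply (le_of_le_add_geometric _ _ (2 * weight 0 * weight 0 + 2 * weight 0)); [nra|]. intros n.
  assert (Hp : 0 <= (/ 2) ^ n) by (apply pow_le; lra).
  assert (Hstep : pdist (picard u0 w0 L) (picard_iter u0 w0 (S n)) t
    <= 4 * weight 0 * (/ 2) ^ n / 2 * weight t).
  { eapply Rle_trans.
    - apply (picard_contraction _ _ _ _ L (picard_iter u0 w0 n) (4 * weight 0 * (/ 2) ^ n));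
        [apply continuous_picard_lim | apply continuous_picard_iter | lra |].
      intros s Hs. assert (H := picard_lim_pdist u0 w0 n s ltac:(lra)).
      assert (1 <= weight s) by (apply weight_ge_1; lra). fold L in H.
      assert (0 <= 4 * weight 0 * (/ 2) ^ n) by (apply Rmult_le_pos; lra). nra.
    - rewrite !Rminus_diag, !Rabs_R0. lra. }
  assert (Happrox := picard_lim_pdist u0 w0 (S n) t Ht). rewrite pdist_sym in Happrox.
  assert (Htri := pdist_triang (picard u0 w0 L) (picard_iter u0 w0 (S n)) L t).
  assert (Hw : 2 * weight 0 * (/ 2) ^ n * weight t <= 2 * weight 0 * (/ 2) ^ n * weight 0)
    by (apply Rmult_le_compat_l; [apply Rmult_le_pos|]; lra).
  simpl pow in Happrox. fold L in Happrox. lra. }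
assert (H0 := pdist_nonneg (picard u0 w0 L) L t). unfold pdist in Hzero, H0.
assert (H1 := Rabs_pos (fst (picard u0 w0 L) t - fst L t)).
assert (H2 := Rabs_pos (snd (picard u0 w0 L) t - snd L t)).
split; symmetry; apply Rminus_diag_uniq, Rabs_eq_0; lra.
Qed.

Lemma picard_iter_param u0 w0 u1 w1 n t : t <= T ->
  pdist (picard_iter u0 w0 n) (picard_iter u1 w1 n) t
  <= 2 * (Rabs (u0 - u1) + Rabs (w0 - w1)) * weight t.
Proof.
set (d := Rabs (u0 - u1) + Rabs (w0 - w1)).
assert (Hd : 0 <= d) by (unfold d; assert (H1 := Rabs_pos (u0 - u1)); assert (H2 := Rabs_pos (w0 - w1)); lra).
revert t. induction n as [|n IH]; intros t Ht;
  assert (HE : d <= d * weight t) by (rewrite <- (Rmult_1_r d) at 1; apply Rmult_le_compat_l, weight_ge_1; lra).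
- unfold pdist. simpl. fold d. lra.
- eapply Rle_trans.
  { apply (picard_contraction _ _ _ _ (picard_iter u0 w0 n) (picard_iter u1 w1 n));
      [apply continuous_picard_iter .. | exact Ht |].
    intros s Hs. apply IH. lra. }
  fold d. lra.
Qed.

Lemma picard_lim_param u0 w0 u1 w1 t :
  Rabs (snd (picard_lim u0 w0) t - snd (picard_lim u1 w1) t)
  <= 2 * (Rabs (u0 - u1) + Rabs (w0 - w1)) * weight 0.
Proof.
assert (Hin := clip_in 0 T t (Rlt_le _ _ hT)).
apply (Rabs_sub_le_of_geometric_approx _ _ (fun n => snd (picard_iter u0 w0 n) (clip 0 T t))
  (fun n => snd (picard_iter u1 w1 n) (clip 0 T t)) _ (2 * weight 0));
  [intros n; apply picard_lim_approx .. |].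
intros n. assert (H := picard_iter_param u0 w0 u1 w1 n (clip 0 T t) (proj2 Hin)).
unfold pdist in H.
assert (H1 := Rabs_pos (fst (picard_iter u0 w0 n) (clip 0 T t) - fst (picard_iter u1 w1 n) (clip 0 T t))).
assert (H2 := weight_le_weight_0 _ (proj1 Hin)).
assert (H3 : 0 <= Rabs (u0 - u1) + Rabs (w0 - w1)) by (assert (H4 := Rabs_pos (u0 - u1)); assert (H5 := Rabs_pos (w0 - w1)); lra).
assert (H4 : 2 * (Rabs (u0 - u1) + Rabs (w0 - w1)) * weight (clip 0 T t)
  <= 2 * (Rabs (u0 - u1) + Rabs (w0 - w1)) * weight 0) by (apply Rmult_le_compat_l; lra).
clear -H H1 H4. lra.
Qed.


Lemma picard_lim_snd_near u0 w0 t : 0 <= t <= T ->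
  Rabs (snd (picard_lim u0 w0) t - w0) <= Rabs beta * T.
Proof.
intros Ht. rewrite (proj2 (picard_lim_fixed u0 w0 t Ht)). unfold picard at 1. cbn [snd].
replace (w0 - beta * RInt (fun s => cos (fst (picard_lim u0 w0) s)) t T - w0)
  with (- (beta * RInt (fun s => cos (fst (picard_lim u0 w0) s)) t T)) by ring.
rewrite Rabs_Ropp, Rabs_mult. apply Rmult_le_compat_l; [apply Rabs_pos|].
eapply Rle_trans; [apply (abs_RInt_le_const _ t T 1); [lra | | intros s _; apply Rabs_le, COS_bound]|].
- apply ex_RInt_continuous_R, continuous_R_comp; [apply (proj1 (continuous_picard_lim u0 w0)) | apply continuous_R_cos].
- lra.
Qed.

(* Clipping [a] to [-1/2, 1/2] keeps the shot defined, and continuous, for every real [a]. *)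
Definition shot (a : R) : fpair := picard_lim (phi_inv_clip (1 / 2) a) (clip (- (1 / 2)) (1 / 2) a).

Definition shoot (a : R) : R := RInt (fun s => slope (snd (shot a) s)) 0 T.

Lemma continuous_R_slope_shot a : continuous_R (fun s => slope (snd (shot a) s)).
Proof. apply (continuous_R_comp _ _ (proj2 (continuous_picard_lim _ _)) continuous_R_slope). Qed.

Lemma shot_snd_near a t : 0 <= t <= T ->
  clip (- (1 / 2)) (1 / 2) a - Rabs beta * T <= snd (shot a) t <= clip (- (1 / 2)) (1 / 2) a + Rabs beta * T.
Proof. intros Ht. apply Rabs_le_between', picard_lim_snd_near, Ht. Qed.

Lemma slope_shot a t : 0 <= t <= T -> slope (snd (shot a) t) = phi_inv (snd (shot a) t).
Proof.
intros Ht. assert (H := shot_snd_near a t Ht). assert (Hc := clip_in (- (1 / 2)) (1 / 2) a ltac:(lra)).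
unfold slope, phi_inv_clip, w_max. rewrite clip_id; [reflexivity | lra].
Qed.

Lemma shoot_lipschitz a b :
  Rabs (shoot a - shoot b) <= T * (slope_lip * (2 * (dphi_inv (1 / 2) + 1) * weight 0)) * Rabs (a - b).
Proof.
assert (HL := slope_lip_pos). assert (HE0 : 1 <= weight 0) by (apply weight_ge_1; lra).
unfold shoot. rewrite <- RInt_minus_continuous_R by apply continuous_R_slope_shot.
eapply Rle_trans.
{ apply (abs_RInt_le_const _ 0 T (slope_lip * (2 * (dphi_inv (1 / 2) + 1) * weight 0) * Rabs (a - b))); [lra| |].
  - apply ex_RInt_continuous_R, continuous_R_minus; apply continuous_R_slope_shot.
  - intros s _. eapply Rle_trans; [apply slope_lipschitz|].
    apply Rle_trans with (slope_lip * (2 * ((dphi_inv (1 / 2) + 1) * Rabs (a - b)) * weight 0)); [|right; ring].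
    apply Rmult_le_compat_l; [lra|].
    eapply Rle_trans; [apply picard_lim_param|].
    assert (H1 := phi_inv_clip_lipschitz (1 / 2) a b ltac:(lra)).
    assert (H2 := clip_lipschitz (- (1 / 2)) (1 / 2) a b ltac:(lra)).
    apply Rmult_le_compat_r; [lra|]. apply Rmult_le_compat_l; lra. }
right. ring.
Qed.

Lemma continuity_shoot : continuity shoot.
Proof.
intros x. apply continuity_pt_filterlim.
assert (HL := slope_lip_pos). assert (HE0 : 1 <= weight 0) by (apply weight_ge_1; lra).
assert (HL2 := dphi_inv_pos (1 / 2) ltac:(lra)).
apply (lipschitz_continuous shoot (T * (slope_lip * (2 * (dphi_inv (1 / 2) + 1) * weight 0)))); [|apply shoot_lipschitz].
repeat apply Rmult_le_pos; lra.
Qed.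

Lemma shoot_pos : 0 < shoot (1 / 2).
Proof.
set (m := 1 / 2 - Rabs beta * T). assert (Hm : 0 < m) by (unfold m; lra).
apply Rlt_le_trans with (RInt (fun _ => m) 0 T).
- rewrite RInt_const. unfold scal; simpl; unfold mult; simpl. nra.
- apply RInt_le; [lra | apply ex_RInt_continuous_R, continuous_R_const | |].
  + apply ex_RInt_continuous_R, continuous_R_slope_shot.
  + intros s Hs. rewrite slope_shot by lra.
    assert (H := shot_snd_near (1 / 2) s ltac:(lra)). rewrite clip_id in H by lra.
    assert (H' := le_phi_inv (snd (shot (1 / 2)) s) ltac:(unfold m in *; lra)). unfold m in *. lra.
Qed.

Lemma shoot_neg : shoot (- (1 / 2)) < 0.
Proof.
set (m := 1 / 2 - Rabs beta * T). assert (Hm : 0 < m) by (unfold m; lra).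
apply Rle_lt_trans with (RInt (fun _ => - m) 0 T).
- apply RInt_le; [lra | | apply ex_RInt_continuous_R, continuous_R_const |].
  + apply ex_RInt_continuous_R, continuous_R_slope_shot.
  + intros s Hs. rewrite slope_shot by lra.
    assert (H := shot_snd_near (- (1 / 2)) s ltac:(lra)). rewrite clip_id in H by lra.
    assert (H' := phi_inv_le (snd (shot (- (1 / 2))) s) ltac:(unfold m in *; lra)). unfold m in *. lra.
- rewrite RInt_const. unfold scal; simpl; unfold mult; simpl. nra.
Qed.

Lemma shot_snd_bound a t : 0 <= t <= T -> -1 < snd (shot a) t < 1.
Proof.
intros Ht. assert (H := shot_snd_near a t Ht). assert (Hc := clip_in (- (1 / 2)) (1 / 2) a ltac:(lra)).
assert (0 <= Rabs beta * T) by (apply Rmult_le_pos; [apply Rabs_pos | lra]). lra.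
Qed.

Lemma is_solution_of_shoot_root a : shoot a = 0 ->
  is_solution T beta (fun t => phi_inv_clip (1 / 2) a - RInt (fun s => slope (snd (shot a) s)) t T).
Proof.
intros Ha.
set (u0 := phi_inv_clip (1 / 2) a). set (w0 := clip (- (1 / 2)) (1 / 2) a).
set (U := fst (shot a)). set (W := snd (shot a)).
set (u := fun t => u0 - RInt (fun s => slope (W s)) t T).
assert (Hu : forall x, is_derive u x (slope (W x)))
  by (intros x; apply (is_derive_sub_RInt u0 (fun s => slope (W s))), continuous_R_slope_shot).
assert (HuU : forall t, 0 <= t <= T -> U t = u t) by (intros t Ht; apply (picard_lim_fixed u0 w0 t Ht)).
assert (HWU : forall t, 0 <= t <= T -> W t = w0 - beta * RInt (fun s => cos (U s)) t T)
  by (intros t Ht; apply (picard_lim_fixed u0 w0 t Ht)).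
exists (fun t => slope (W t)). split; [|split; [|split]].
- split; intros x _.
  + apply has_deriv_on_of_is_derive, Hu.
  + apply continuous_on_at_of_continuous, continuous_R_slope_shot.
- split.
  + intros x Hx. apply (has_deriv_on_ext _ _ (fun t => w0 - beta * RInt (fun s => cos (U s)) t T)); [exact Hx | |].
    * intros s Hs. unfold W. rewrite slope_shot by exact Hs.
      rewrite phi_phi_inv by (apply shot_snd_bound, Hs). apply HWU, Hs.
    * rewrite <- (HuU x Hx). apply has_deriv_on_of_is_derive.
      apply (is_derive_sub_scal_RInt w0 beta (fun s => cos (U s))).
      exact (continuous_R_comp _ _ (proj1 (continuous_picard_lim u0 w0)) continuous_R_cos).
  + intros x _. apply continuous_on_at_of_continuous, continuous_R_scal.
    exact (continuous_R_comp _ _ (continuous_R_of_derive _ _ Hu) continuous_R_cos).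
- unfold u. rewrite RInt_point. change (RInt (fun s => slope (W s)) 0 T) with (shoot a). rewrite Ha. unfold zero; simpl. ring.
- assert (HWT : W T = w0) by (rewrite HWU, RInt_point by lra; unfold zero; simpl; ring).
  unfold u. rewrite RInt_point, HWT. unfold zero; simpl.
  unfold slope, phi_inv_clip, u0, w0. rewrite (clip_id (- w_max)).
  + unfold phi_inv_clip. ring.
  + assert (Hc := clip_in (- (1 / 2)) (1 / 2) a ltac:(lra)).
    assert (0 <= Rabs beta * T) by (apply Rmult_le_pos; [apply Rabs_pos | lra]). unfold w_max. lra.
Qed.

Lemma exists_solution : exists u, is_solution T beta u.
Proof.
destruct (IVT shoot (- (1 / 2)) (1 / 2) continuity_shoot ltac:(lra) shoot_neg shoot_pos) as [a [_ Ha]].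
eexists. exact (is_solution_of_shoot_root a Ha).
Qed.

End Shooting.

Theorem mainTheorem9 (T beta : R) (hT : 0 < T) (hb : Rabs beta < 1 / (2 * T)) :
  exists u : R -> R, is_solution T beta u.
Proof.
apply exists_solution; [exact hT|].
apply (Rmult_lt_compat_r T) in hb; [|exact hT].
replace (1 / (2 * T) * T) with (1 / 2) in hb by (field; lra). exact hb.
Qed.
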